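(* Let $\vec{S}$ be a signed digraph on $n$ vertices with no self-loops and no dual edges, and suppose $\vec{S}$ is cycle-disjoint. For $k=3,\ldots,n$ let $c_k^+$ (resp. $c_k^-$) be the number of positive (resp. negative) cycles of length $k$ in $\vec{S}$, and let $n_{\textrm{cyc}}=\sum_{k} k\,(c_k^+ + c_k^-)$ be the number of vertices lying on a cycle. Then the eigenvalue spectrum (as a multiset) of the adjacency matrix $\mathbf{A}$ of $\vec{S}$ consists of the eigenvalue $0$ with multiplicity $n-n_{\textrm{cyc}}$, together with the union, over $k=3,\ldots,n$, of $c_k^+$ copies of the $k$-th roots of unity and $c_k^-$ copies of the $k$-th roots of $-1$.
   Context: A signed digraph is a directed graph on vertex set $\{v_1,\ldots,v_n\}$ in which each edge $v_i\to v_j$ carries a sign $\sigma_{ij}\in\{-1,+1\}$. Its adjacency matrix $\mathbf{A}=(a_{ij})$ has $a_{ij}=\sigma_{ij}$ if $v_i\to v_j$ is an edge and $a_{ij}=0$ otherwise. No self-loops means $v_i\to v_i$ is never an edge; no dual edges means that if $v_i\to v_j$ is an edge then $v_j\to v_i$ is not. A cycle of length $k$ is a directed path of length $k$ from a vertex back to itself that visits no vertex twice (other than start/end), respecting edge directions; it is positive (negative) if the product of the signs of its edges is $+1$ ($-1$). $\vec{S}$ is cycle-disjoint if every vertex lies on at most one cycle. *)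

From HB Require Import structures.
From mathcomp Require Import all_boot all_order all_algebra all_field.
Set Implicit Arguments. Unset Strict Implicit. Unset Printing Implicit Defensive.
Import Order.TTheory GRing.Theory Num.Theory.
Local Open Scope ring_scope.

(* A signed digraph on vertex set 'I_n is represented by its adjacency matrix
   A : 'M[int]_n, with entries in {-1, 0, 1}; v_i -> v_j is an edge iff A i j != 0,
   and its sign is A i j. *)

Definition signed_adj (n : nat) (A : 'M[int]_n) : Prop :=
  forall i j, A i j = 0 \/ A i j = 1 \/ A i j = -1.

Definition edge (n : nat) (A : 'M[int]_n) : rel 'I_n := fun i j => A i j != 0.

Definition no_self_loops (n : nat) (A : 'M[int]_n) : Prop :=
  forall i, ~~ edge A i i.

Definition no_dual_edges (n : nat) (A : 'M[int]_n) : Prop :=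
  forall i j, edge A i j -> ~~ edge A j i.

(* Representing a cycle by its edge set identifies the k rotations
   of the vertex sequence, so cycles are counted as subgraphs. *)
Definition is_cycle_of_length (n : nat) (A : 'M[int]_n) (k : nat)
    (E : {set 'I_n * 'I_n}) : bool :=
  (0 < k)%N &&
  [exists s : k.-tuple 'I_n,
    [&& uniq s, cycle (edge A) s & E == [set (x, next s x) | x in s]]].

Definition cycle_sign (n : nat) (A : 'M[int]_n) (E : {set 'I_n * 'I_n}) : int :=
  \prod_(e in E) A e.1 e.2.

Definition on_cycle (n : nat) (v : 'I_n) (E : {set 'I_n * 'I_n}) : bool :=
  [exists w, (v, w) \in E].

Definition cycle_disjoint (n : nat) (A : 'M[int]_n) : Prop :=
  forall (v : 'I_n) (E1 E2 : {set 'I_n * 'I_n}) (k1 k2 : nat),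
    is_cycle_of_length A k1 E1 -> is_cycle_of_length A k2 E2 ->
    on_cycle v E1 -> on_cycle v E2 -> E1 = E2.

Definition num_pos_cycles (n : nat) (A : 'M[int]_n) (k : nat) : nat :=
  #|[set E : {set 'I_n * 'I_n} |
       is_cycle_of_length A k E && (cycle_sign A E == 1)]|.

Definition num_neg_cycles (n : nat) (A : 'M[int]_n) (k : nat) : nat :=
  #|[set E : {set 'I_n * 'I_n} |
       is_cycle_of_length A k E && (cycle_sign A E == -1)]|.

Definition n_cyc (n : nat) (A : 'M[int]_n) : nat :=
  (\sum_(3 <= k < n.+1) k * (num_pos_cycles A k + num_neg_cycles A k))%N.

Definition adjC (n : nat) (A : 'M[int]_n) : 'M[algC]_n := map_mx intr A.

From HB Require Import structures.
From mathcomp Require Import all_boot all_order all_algebra all_field.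
From mathcomp Require Import perm action.
Set Implicit Arguments. Unset Strict Implicit. Unset Printing Implicit Defensive.
Import Order.TTheory GRing.Theory Num.Theory.
Local Open Scope ring_scope.

(* Cycle-disjointness makes "successor along its cycle" (the identity off the
   cycles) a permutation [succ_perm] of the vertices.  In the Leibniz expansion
   of det (X - A) a permutation contributes only if it sends every moved vertex
   along an edge; its orbits are then cycles of the digraph, so it agrees with
   [succ_perm] wherever it moves.  Hence A may be replaced by the weighted
   permutation matrix of [succ_perm], whose characteristic polynomial is the
   product over the orbits o of X^|o| - (product of the weights on o).  Fixed
   points give factors X; the other orbits are exactly the cycles, of length at
   least 3 as there are no dual edges, with weight product their sign +-1; and
   X^k - 1, X^k + 1 have simple roots. *)

Section KeepRows.
Variables (R : comPzRingType) (n : nat).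
Implicit Types (M : 'M[R]_n) (U V : {set 'I_n}).

Definition keep_rows M U : 'M[R]_n :=
  \matrix_(i, j) if i \in U then M i j else (i == j)%:R.

Definition row_closed M U := forall i j, M i j != 0 -> i \in U -> j \in U.

Lemma keep_rowsT M : keep_rows M setT = M.
Proof. by apply/matrixP => i j; rewrite !mxE in_setT. Qed.

Lemma keep_rows0 M : keep_rows M set0 = 1%:M.
Proof. by apply/matrixP => i j; rewrite !mxE in_set0. Qed.

Lemma keep_rowsU M U V : row_closed M U -> [disjoint U & V] ->
  keep_rows M (U :|: V) = keep_rows M U *m keep_rows M V.
Proof.
move=> clU dUV; apply/matrixP => i j; rewrite !mxE in_setU.
have [iU|iU] /= := boolP (i \in U).
  rewrite (bigD1 j) //= big1 ?addr0 => [|l lj]; rewrite !mxE iU.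
    have [->|/clU/(_ iU) jU] := eqVneq (M i j) 0; first by rewrite mul0r.
    by rewrite (disjointFr dUV jU) eqxx mulr1.
  have [->|/clU/(_ iU) lU] := eqVneq (M i l) 0; first by rewrite mul0r.
  by rewrite (disjointFr dUV lU) (negbTE lj) mulr0.
rewrite (bigD1 i) //= big1 ?addr0 => [|l li]; rewrite !mxE (negbTE iU).
  by rewrite eqxx mul1r.
by rewrite eq_sym (negbTE li) mul0r.
Qed.

Lemma det_keep_rows_cover M (P : {set {set 'I_n}}) :
  {in P, forall U, row_closed M U} -> trivIset P ->
  \det (keep_rows M (cover P)) = \prod_(U in P) \det (keep_rows M U).
Proof.
elim: {P}#|P| {-2}P (eqxx #|P|) => [|m IH] P /eqP cardP clP trivP.
  by rewrite (cards0_eq cardP) /cover !big_set0 keep_rows0 det1.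
have [U UP] : exists U, U \in P by apply/set0Pn; rewrite -card_gt0 cardP.
have coverP : cover P = U :|: cover (P :\ U).
  rewrite coverD1 //; apply/setP => x; rewrite !inE.
  by case: (boolP (x \in U)) => //= xU; apply/bigcupP; exists U.
have disjU : [disjoint U & cover (P :\ U)].
  rewrite coverD1 // disjoints_subset; apply/subsetP => x xU.
  by rewrite !inE xU.
rewrite (big_setD1 U UP) coverP keep_rowsU ?det_mulmx -?IH //; last exact: clP.
- by move: (cardsD1 U P); rewrite UP cardP => -[->].
- by move=> V /setD1P[_ /clP].
- exact: trivIsetD.
Qed.

End KeepRows.

Lemma char_poly_term_eq0 (R : comNzRingType) n (M : 'M[R]_n) (t : 'S_n) i :
  t i != i -> M i (t i) = 0 -> \prod_j char_poly_mx M j (t j) = 0.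
Proof.
move=> ti Mi0; rewrite (bigD1 i) //= !mxE eq_sym (negbTE ti) Mi0.
by rewrite mulr0n subr0 mul0r.
Qed.

Section PermOrbits.
Variables (T : finType) (s : {perm T}).
Implicit Types x y : T.

Lemma porbit_eq x y : y \in porbit s x -> porbit s y = porbit s x.
Proof. by rewrite -eq_porbit_mem => /eqP. Qed.

Lemma perm_porbit x : s x \in porbit s x.
Proof. by have := mem_porbit s 1 x; rewrite expg1. Qed.

Lemma porbitS x y : y \in porbit s x -> s y \in porbit s x.
Proof. by move=> /porbit_eq <-; apply: perm_porbit. Qed.

Lemma porbit_fix x : s x = x -> porbit s x = [set x].
Proof.
move=> sx; apply/setP => y; rewrite inE; apply/porbitP/eqP => [[m ->]|->].
  by rewrite permX; elim: m => //= m ->.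
by exists 0%N; rewrite expg0 perm1.
Qed.

Lemma card_porbit_gt1 x : (1 < #|porbit s x|)%N = (s x != x).
Proof.
have [sx|sx] := eqVneq (s x) x; first by rewrite porbit_fix ?cards1.
apply: leq_trans (subset_leq_card (_ : [set x; s x] \subset _)).
  by rewrite cards2 eq_sym sx.
by apply/subsetP => y; rewrite !inE => /orP[] /eqP ->; rewrite ?porbit_id ?perm_porbit.
Qed.

Lemma porbit_moved x y : y \in porbit s x -> (s y != y) = (s x != x).
Proof. by move=> /porbit_eq yx; rewrite -!card_porbit_gt1 yx. Qed.

Lemma partition_porbits : partition (porbits s) [set: T].
Proof.
apply/and3P; split.
- apply/eqP/setP => x; rewrite inE; apply/bigcupP.
  by exists (porbit s x); [apply: imset_f | apply: porbit_id].
- apply/trivIsetP => _ _ /imsetP[x _ ->] /imsetP[y _ ->] xy.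
  rewrite disjoints_subset; apply/subsetP => z zx; rewrite inE.
  by apply: contra xy => zy; rewrite -(porbit_eq zx) -(porbit_eq zy).
- by apply/imsetP => -[x _ /setP/(_ x)]; rewrite porbit_id inE.
Qed.

Lemma fcycle_traject_porbit x : fcycle s (traject s x #|porbit s x|).
Proof.
have := card_porbit_neq0 s x; have := iter_porbit s x.
case: #|porbit s x| => // k sk _; rewrite trajectS /=.
by rewrite -[X in rcons _ X]sk iterSr -trajectSr fpath_traject.
Qed.

Lemma porbit_astabs x : s \in ('N(porbit s x | 'P))%g.
Proof.
by apply/astabsP => y; rewrite /= -!eq_porbit_mem -[in RHS](porbit_perm s 1) expg1.
Qed.

Lemma restr_porbitE x y :
  restr_perm (porbit s x) s y = if y \in porbit s x then s y else y.
Proof.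
case: ifP => yx; first by rewrite restr_permE ?porbit_astabs.
by apply: out_perm (restr_perm_on _ _) _; rewrite yx.
Qed.

End PermOrbits.

Lemma porbits_restr (T : finType) (s : {perm T}) x :
  porbits (restr_perm (porbit s x) s) =
  porbit s x |: [set [set y] | y in ~: porbit s x].
Proof.
set c := restr_perm _ s.
have cE y : y \in porbit s x -> porbit c y = porbit s x.
  move=> yx; rewrite -(porbit_eq yx); apply/setP => z.
  suff iterE m : (c ^+ m)%g y = (s ^+ m)%g y.
    by apply/porbitP/porbitP => -[m ->]; exists m; rewrite iterE.
  rewrite !permX; elim: m => //= m ->; rewrite restr_porbitE.
  by rewrite -permX -(porbit_eq yx) mem_porbit.
have cN y : y \notin porbit s x -> porbit c y = [set y].
  by move=> yx; rewrite porbit_fix // restr_porbitE (negbTE yx).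
apply/setP => o; rewrite !inE; apply/imsetP/orP => [[y _ ->]|[/eqP ->|/imsetP[y]]].
- have [yx|yx] := boolP (y \in porbit s x); first by rewrite cE // eqxx; left.
  by right; rewrite cN //; apply: imset_f; rewrite inE.
- by exists x => //; rewrite cE // porbit_id.
- by rewrite inE => yx ->; exists y => //; rewrite cN.
Qed.

Lemma odd_restr_porbit (T : finType) (s : {perm T}) x :
  odd_perm (restr_perm (porbit s x) s) = ~~ odd #|porbit s x|.
Proof.
rewrite /odd_perm porbits_restr cardsU1 card_imset; last exact: set1_inj.
have -> : porbit s x \in [set [set y] | y in ~: porbit s x] = false.
  apply/imsetP => -[y]; rewrite inE => yx ox.
  by move: (porbit_id s x); rewrite ox inE => /eqP xy; rewrite -xy porbit_id in yx.
rewrite cardsCs setCK add1n /= oddB ?max_card //.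
by case: (odd #|T|); case: (odd _).
Qed.

Section PermWeightMx.
Variables (R : comNzRingType) (n : nat) (s : {perm 'I_n}) (w : 'I_n -> R).

Definition perm_wmx : 'M[R]_n := \matrix_(i, j) if j == s i then w i else 0.

Lemma row_closed_porbit x : row_closed (char_poly_mx perm_wmx) (porbit s x).
Proof.
move=> i j; rewrite !mxE; have [<- //|ij] := eqVneq i j.
rewrite mulr0n sub0r oppr_eq0 polyC_eq0; have [-> _|_] := eqVneq j (s i).
  exact: porbitS.
by rewrite eqxx.
Qed.

Section Block.
Variable x : 'I_n.
Let o := porbit s x.
Let K := keep_rows (char_poly_mx perm_wmx) o.
Let c := restr_perm o s.

Lemma block_mxE i j : K i j = if i \in o then
  'X *+ (i == j) - (if j == s i then w i else 0)%:P else (i == j)%:R.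
Proof. by rewrite !mxE. Qed.

Lemma block_term_eq0 (t : 'S_n) i :
  t i != i -> (i \notin o) || (t i != s i) -> \prod_j K j (t j) = 0.
Proof.
move=> ti tsi; rewrite (bigD1 i) //= block_mxE eq_sym (negbTE ti) mulr0n sub0r.
case: ifP tsi => [_ /= /negbTE ->|_ _]; last by rewrite mul0r.
by rewrite oppr0 mul0r.
Qed.

(* A contributing permutation moves points only inside [o] and along [s], so
   its set of moved points is [s]-stable, hence empty or all of [o]. *)
Lemma block_term_support (t : 'S_n) :
  \prod_j K j (t j) != 0 -> t = 1%g \/ t = c.
Proof.
move=> tK.
have tsE i : t i != i -> (i \in o) && (t i == s i).
  move=> ti; apply: contraR tK; rewrite negb_and => tsi.
  exact/eqP/(block_term_eq0 ti tsi).
have [->|[y ty]] : t = 1%g \/ exists y, t y != y; [|by left|].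
  have [/existsP[y ty]|/existsPn t1] := boolP [exists y, t y != y].
    by right; exists y.
  by left; apply/permP => i; rewrite perm1; apply/eqP/negPn/t1.
right; have /andP[yo _] := tsE y ty.
have movedS z : t z != z -> t (s z) != s z.
  move=> tz; have /andP[_ /eqP <-] := tsE z tz.
  by apply: contra tz => /eqP/perm_inj/eqP.
apply/permP => i; rewrite restr_porbitE -/o; case: ifP => io.
  have [m ->] : exists m, i = (s ^+ m)%g y.
    by apply/porbitP; rewrite (porbit_eq yo).
  suff tm : t ((s ^+ m)%g y) != (s ^+ m)%g y by case/andP: (tsE _ tm) => _ /eqP.
  by rewrite permX; elim: m => //= m; apply: movedS.
by apply/eqP; apply: contraFT io => /tsE/andP[].
Qed.

Lemma block_term_other (t : 'S_n) :
  t != 1%g -> t != c -> (-1) ^+ t * \prod_j K j (t j) = 0.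
Proof.
move=> t1 tc; have [->|/block_term_support[]] := eqVneq (\prod_j K j (t j)) 0.
- by rewrite mulr0.
- by move/eqP: t1.
- by move/eqP: tc.
Qed.

Lemma det_block : \det K = 'X^#|o| - (\prod_(i in o) w i)%:P.
Proof.
rewrite /determinant (bigD1 (1%g : 'S_n)) //= odd_perm1 expr0 mul1r.
have [sx|sx] := eqVneq (s x) x.
  have oE : o = [set x] by rewrite /o porbit_fix.
  have c1 : c = 1%g.
    by apply/permP => i; rewrite restr_porbitE -/o oE perm1 inE; case: eqP => // ->.
  rewrite [X in _ + X]big1 ?addr0 => [|t t1]; last first.
    by apply: block_term_other; rewrite ?c1.
  rewrite oE cards1 big_set1 expr1 (bigD1 x) //= big1 => [|i ix].
    by rewrite perm1 block_mxE oE inE !eqxx sx eqxx mulr1.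
  by rewrite perm1 block_mxE oE inE (negbTE ix) eqxx.
have moved i : i \in o -> s i != i by move=> io; rewrite (porbit_moved io).
have c1 : c != 1%g.
  apply: contra sx => /eqP c1.
  by have := restr_porbitE s x x; rewrite porbit_id -/o -/c c1 perm1 => <-.
rewrite (bigD1 c) //= [X in _ + (_ + X)]big1 ?addr0 => [|t /andP[t1 tc]]; last first.
  exact: block_term_other.
have -> : \prod_i K i ((1%g : 'S_n) i) = 'X^#|o|.
  rewrite -prodr_const [RHS]big_mkcond; apply: eq_bigr => i _.
  rewrite perm1 block_mxE eqxx; case: ifP => io //.
  by rewrite eq_sym (negbTE (moved i io)) subr0.
have -> : \prod_i K i (c i) = \prod_(i in o) - (w i)%:P.
  rewrite [RHS]big_mkcond; apply: eq_bigr => i _; rewrite block_mxE restr_porbitE -/o.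
  case io: (i \in o); last by rewrite eqxx.
  by rewrite eqxx eq_sym (negbTE (moved i io)) mulr0n sub0r.
rewrite prodrN odd_restr_porbit -/o -rmorph_prod -[(-1) ^+ #|o|]signr_odd.
by case: (odd #|o|); rewrite /= ?expr0 ?expr1 ?mul1r ?mulN1r.
Qed.

End Block.

Lemma char_poly_perm_wmx :
  char_poly perm_wmx = \prod_(o in porbits s) ('X^#|o| - (\prod_(i in o) w i)%:P).
Proof.
have /and3P[/eqP coverT trivS _] := partition_porbits s.
rewrite /char_poly -[char_poly_mx _]keep_rowsT -coverT det_keep_rows_cover //.
  by apply: eq_bigr => _ /imsetP[x _ ->]; apply: det_block.
by move=> _ /imsetP[x _ ->]; apply: row_closed_porbit.
Qed.

End PermWeightMx.

Lemma mup_prod (R : fieldType) (I : finType) (P : pred I) (q : I -> {poly R}) z :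
  (forall i, P i -> q i != 0) ->
  mup z (\prod_(i | P i) q i) = (\sum_(i | P i) mup z (q i))%N.
Proof.
move=> q_neq0; suff [] : \prod_(i | P i) q i != 0 /\
  mup z (\prod_(i | P i) q i) = (\sum_(i | P i) mup z (q i))%N by [].
apply: (big_ind2 (fun p m => p != 0 /\ mup z p = m)).
- by rewrite oner_neq0 mupNroot // root1.
- by move=> p1 m1 p2 m2 [p1_neq0 <-] [p2_neq0 <-]; rewrite mulf_neq0 // mupM.
- by move=> i Pi; split; first exact: q_neq0.
Qed.

(* [X^k - c] is separable when [c != 0]: a double root would also be a root
   of the derivative [k X^(k-1)], i.e. would be [0]. *)
Lemma mup_XnsubC (R : numFieldType) (z c : R) k : c != 0 -> (0 < k)%N ->
  mup z ('X^k - c%:P) = (z ^+ k == c).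
Proof.
move=> c_neq0 k_gt0; set q := 'X^k - c%:P.
have q_neq0 : q != 0 by rewrite -size_poly_eq0 size_XnsubC.
have rootE : root q z = (z ^+ k == c) by rewrite /root !hornerE subr_eq0.
have [qz|qNz] := boolP (root q z); last by rewrite mupNroot // -rootE (negbTE qNz).
rewrite -rootE qz; apply/eqP; rewrite eqn_leq mup_leq // mup_geq // expr1.
rewrite dvdp_XsubCl qz andbT; apply/negP => /dvdpP[p qE].
have z_neq0 : z != 0.
  apply: contra c_neq0 => /eqP z0.
  by move: qz; rewrite rootE z0 expr0n gtn_eqF // eq_sym.
have : q^`().[z] = 0.
  rewrite qE derivM expr2 derivM derivXsubC !(hornerD, hornerM) hornerN hornerX.
  by rewrite !hornerC subrr !(mulr0, mul0r, addr0).
rewrite derivB derivXn derivC subr0 hornerMn hornerXn.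
by move/eqP; rewrite mulrn_eq0 expf_eq0 (negbTE z_neq0) andbF orbF gtn_eqF.
Qed.

Lemma sum_by_len_sign (I : finType) (P : pred I) (len : I -> nat) (sg : I -> int)
    (G : nat -> int -> nat) (a b : nat) :
  (forall i, P i -> a <= len i < b)%N -> (forall i, P i -> sg i = 1 \/ sg i = -1) ->
  (\sum_(i | P i) G (len i) (sg i) =
   \sum_(a <= k < b)
     (#|[set i | [&& P i, len i == k & sg i == 1%R]]| * G k 1%R +
      #|[set i | [&& P i, len i == k & sg i == (-1)%R]]| * G k (-1)%R))%N.
Proof.
move=> len_in sg_pm.
have cardE k eps : #|[set i | [&& P i, len i == k & sg i == eps]]| =
    (\sum_(i | P i) ((len i == k) && (sg i == eps)))%N.
  rewrite -sum1_card big_mkcond [RHS]big_mkcond; apply: eq_bigr => i _.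
  by rewrite inE; case: (P i) => //=; case: (_ && _).
rewrite (eq_bigr (fun i => \sum_(a <= k < b) (len i == k) * G k (sg i)))%N; last first.
  move=> i Pi; rewrite (eq_bigr (fun k => if k == len i then G k (sg i) else 0%N)).
    by rewrite -big_mkcond big_nat1_eq len_in.
  by move=> k _; rewrite eq_sym; case: (k == len i); rewrite ?mul1n.
rewrite exchange_big /=; apply: eq_bigr => k _.
rewrite !cardE !big_distrl -big_split /=; apply: eq_bigr => i Pi.
by case: (len i == k) => /=; case: (sg_pm i Pi) => ->; rewrite ?mul0n ?mul1n ?addn0.
Qed.

Section SignedDigraph.
Variables (n : nat) (A : 'M[int]_n).
Implicit Types (s : {perm 'I_n}) (o : {set 'I_n}) (t : seq 'I_n).

Definition perm_edges s o : {set 'I_n * 'I_n} := [set (y, s y) | y in o].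

Definition cycle_edges t : {set 'I_n * 'I_n} := [set (x, next t x) | x in t].

Lemma mem_perm_edges s o v w : ((v, w) \in perm_edges s o) = (v \in o) && (w == s v).
Proof.
by apply/imsetP/andP => [[y yo [-> ->]]|[vo /eqP ->]]; [split|exists v].
Qed.

Lemma perm_edges_inj s : injective (perm_edges s).
Proof.
move=> o1 o2 eq_o; apply/setP => i.
by have := mem_perm_edges s o1 i (s i); rewrite eq_o mem_perm_edges eqxx !andbT.
Qed.

Lemma cycle_sign_perm_edges s o :
  cycle_sign A (perm_edges s o) = \prod_(i in o) A i (s i).
Proof. by rewrite /cycle_sign big_imset //= => i j _ _ [->]. Qed.

Lemma mem_cycle_edges t v w :
  ((v, w) \in cycle_edges t) = (v \in t) && (w == next t v).
Proof.
by apply/imsetP/andP => [[x xt [-> ->]]|[vt /eqP ->]]; [split|exists v].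
Qed.

Lemma cycle_of_length_seq k E : is_cycle_of_length A k E -> exists t,
  [/\ uniq t, cycle (edge A) t, size t = k, (0 < k)%N &
      E = cycle_edges t].
Proof.
case/andP => k_gt0 /existsP[t /and3P[t_uniq t_cycle /eqP ->]].
by exists t; split; rewrite ?size_tuple.
Qed.

Lemma porbit_cycle s x : {in porbit s x, forall y, edge A y (s y)} ->
  is_cycle_of_length A #|porbit s x| (perm_edges s (porbit s x)).
Proof.
move=> s_edge; set t := traject s x #|porbit s x|.
have t_uniq : uniq t by apply: uniq_traject_porbit.
have t_fcycle : fcycle s t by apply: fcycle_traject_porbit.
have tE y : (y \in t) = (y \in porbit s x) by rewrite porbit_traject.
rewrite /is_cycle_of_length lt0n card_porbit_neq0; apply/existsP.
exists (@Tuple _ _ t (introT eqP (size_traject _ _ _))); rewrite /= t_uniq /=.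
apply/andP; split.
  by apply: (cycle_from_next t_uniq) => y yt; rewrite (nextE t_fcycle yt) s_edge -?tE.
apply/eqP/setP => -[v w]; rewrite mem_perm_edges mem_cycle_edges tE.
by case: (boolP (v \in porbit s x)) => //= vx; rewrite (nextE t_fcycle) ?tE.
Qed.

Lemma card_cycle_seq t : uniq t -> (size t <= n)%N.
Proof. by move=> /card_uniqP <-; apply: leq_trans (max_card _) _; rewrite card_ord. Qed.

Definition cycle_edge v w :=
  [exists k : 'I_n.+1, [exists E, is_cycle_of_length A k E && ((v, w) \in E)]].

Lemma cycle_edgeP v w :
  reflect (exists k E, is_cycle_of_length A k E /\ (v, w) \in E) (cycle_edge v w).
Proof.
apply: (iffP idP) => [/existsP[k /existsP[E /andP[]]]|[k [E [kE vwE]]]].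
  by exists k, E.
have [t [t_uniq _ tk _ _]] := cycle_of_length_seq kE.
have k_lt : (k < n.+1)%N by rewrite ltnS -tk card_cycle_seq.
by apply/existsP; exists (Ordinal k_lt); apply/existsP; exists E; rewrite /= kE.
Qed.

Lemma cycle_edge_seq v w : cycle_edge v w -> exists k t,
  [/\ is_cycle_of_length A k (cycle_edges t), uniq t,
      cycle (edge A) t, v \in t & w = next t v].
Proof.
case/cycle_edgeP => k [E [kE vwE]].
have [t [t_uniq t_cycle _ _ Et]] := cycle_of_length_seq kE.
move: vwE; rewrite Et mem_cycle_edges => /andP[vt /eqP ->].
by exists k, t; split; rewrite -?Et.
Qed.

Lemma cycle_edge_edge v w : cycle_edge v w -> edge A v w.
Proof.
by case/cycle_edge_seq => k [t [_ _ t_cycle vt ->]]; apply: next_cycle t_cycle vt.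
Qed.

Lemma cycle_edge_next v w : cycle_edge v w -> exists u, cycle_edge w u.
Proof.
case/cycle_edge_seq => k [t [kt _ _ vt ->]]; exists (next t (next t v)).
apply/cycle_edgeP; exists k, (cycle_edges t); split => //.
by rewrite mem_cycle_edges mem_next vt eqxx.
Qed.

Hypothesis A_loopless : no_self_loops A.

Lemma cycle_edge_neq v w : cycle_edge v w -> v != w.
Proof. by move/cycle_edge_edge; apply: contraTneq => ->; apply: A_loopless. Qed.

Hypothesis A_cycle_disjoint : cycle_disjoint A.

(* By cycle-disjointness the cycle through a vertex is unique, and it
   determines both the successor and the predecessor of that vertex. *)
Lemma cycle_edge_functional v w w' : cycle_edge v w -> cycle_edge v w' -> w = w'.
Proof.
case/cycle_edge_seq => k [t [kt _ _ vt ->]].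
case/cycle_edge_seq => k' [t' [kt' _ _ vt' ->]].
have eq_t : cycle_edges t = cycle_edges t'.
  by apply: (A_cycle_disjoint (v := v) kt kt'); apply/existsP;
    [exists (next t v) | exists (next t' v)]; rewrite mem_cycle_edges eqxx andbT.
have := mem_cycle_edges t v (next t v).
by rewrite eq_t mem_cycle_edges vt eqxx => /andP[_ /eqP].
Qed.

Lemma cycle_edge_injective v v' w : cycle_edge v w -> cycle_edge v' w -> v = v'.
Proof.
case/cycle_edge_seq => k [t [kt t_uniq _ vt ->]].
case/cycle_edge_seq => k' [t' [kt' _ _ vt' ev]].
have wt : next t v \in t by rewrite mem_next.
have eq_t : cycle_edges t = cycle_edges t'.
  apply: (A_cycle_disjoint (v := next t v) kt kt'); apply/existsP;
    [exists (next t (next t v)) | exists (next t' (next t v))];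
    rewrite mem_cycle_edges eqxx andbT // ev mem_next //.
have := mem_cycle_edges t v' (next t v); rewrite eq_t mem_cycle_edges vt' -ev eqxx.
by move=> /esym/andP[_ /eqP]; apply: (can_inj (prev_next t_uniq)).
Qed.

Definition succ v := if [pick w | cycle_edge v w] is Some w then w else v.

Lemma succE v w : cycle_edge v w -> succ v = w.
Proof.
rewrite /succ => vw; case: pickP => [w' vw'|/(_ w)]; last by rewrite vw.
exact: cycle_edge_functional vw' vw.
Qed.

Lemma succ_moved v : succ v != v -> cycle_edge v (succ v).
Proof. by rewrite /succ; case: pickP => [//|_]; rewrite eqxx. Qed.

Lemma cycle_edge_succ_moved v w : cycle_edge v w -> succ w != w.
Proof. by case/cycle_edge_next => u wu; rewrite (succE wu) eq_sym cycle_edge_neq. Qed.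

Lemma succ_inj : injective succ.
Proof.
move=> a b; have [a_fix|a_mov] := eqVneq (succ a) a.
  have [b_fix|b_mov] := eqVneq (succ b) b; first by rewrite a_fix b_fix.
  move=> ab; have := cycle_edge_succ_moved (succ_moved b_mov).
  by rewrite -ab !a_fix eqxx.
have [b_fix|b_mov] := eqVneq (succ b) b.
  move=> ab; have := cycle_edge_succ_moved (succ_moved a_mov).
  by rewrite ab !b_fix eqxx.
by move=> ab; apply: cycle_edge_injective (succ_moved a_mov) _; rewrite ab succ_moved.
Qed.

Definition succ_perm : {perm 'I_n} := perm succ_inj.

Lemma succ_permE v w : cycle_edge v w -> succ_perm v = w.
Proof. by rewrite permE; apply: succE. Qed.

Lemma succ_perm_edge v : succ_perm v != v -> edge A v (succ_perm v).
Proof. by rewrite permE => /succ_moved/cycle_edge_edge. Qed.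

Lemma moved_along_edges_succ (t : {perm 'I_n}) i :
  (forall j, t j != j -> edge A j (t j)) -> t i != i -> t i = succ_perm i.
Proof.
move=> t_edge ti; apply/esym/succ_permE/cycle_edgeP.
exists #|porbit t i|, (perm_edges t (porbit t i)); split.
  by apply: porbit_cycle => y yi; rewrite t_edge // (porbit_moved yi).
by rewrite mem_perm_edges porbit_id eqxx.
Qed.

Lemma char_poly_adj_succ : char_poly (adjC A) =
  char_poly (perm_wmx succ_perm (fun i => adjC A i (succ_perm i))).
Proof.
rewrite /char_poly /determinant; apply: eq_bigr => t _; congr (_ * _).
have [along|] := boolP [forall i, (t i == i) || (t i == succ_perm i)].
  apply: eq_bigr => i _; rewrite !mxE; congr (_ - _%:P).
  have /orP[/eqP ti|/eqP ->] := forallP along i; last by rewrite eqxx.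
  rewrite ti; case: eqP => [<- //|_].
  by have := A_loopless i; rewrite /edge negbK => /eqP ->.
case/forallPn => i; rewrite negb_or => /andP[ti tsi].
rewrite [RHS](char_poly_term_eq0 ti); last by rewrite mxE (negbTE tsi).
have [/existsP[j /andP[tj /negPn/eqP tj0]]|/existsPn no_gap] :=
  boolP [exists j, (t j != j) && ~~ edge A j (t j)].
  by apply: (char_poly_term_eq0 tj); rewrite mxE tj0.
suff : t i = succ_perm i by move/eqP; rewrite (negbTE tsi).
by apply: moved_along_edges_succ ti => j tj; move: (no_gap j); rewrite tj negbK.
Qed.

Definition orbit_sign o : int := \prod_(i in o) A i (succ_perm i).

Lemma char_poly_adj : char_poly (adjC A) =
  \prod_(o in porbits succ_perm) ('X^#|o| - ((orbit_sign o)%:~R)%:P).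
Proof.
rewrite char_poly_adj_succ char_poly_perm_wmx; apply: eq_bigr => o _.
rewrite /orbit_sign (rmorph_prod (intr : int -> algC)).
by under eq_bigr do rewrite mxE.
Qed.

Lemma nontrivial_orbit_moved o i :
  o \in porbits succ_perm -> (1 < #|o|)%N -> i \in o -> succ_perm i != i.
Proof. by case/imsetP => x _ -> x_mov /porbit_moved ->; rewrite -card_porbit_gt1. Qed.

Lemma nontrivial_orbit_cycle o : o \in porbits succ_perm -> (1 < #|o|)%N ->
  is_cycle_of_length A #|o| (perm_edges succ_perm o).
Proof.
move=> oP o_gt1; have o_mov := nontrivial_orbit_moved oP o_gt1.
case/imsetP: oP o_mov => x _ -> o_mov.
by apply: porbit_cycle => y /o_mov; apply: succ_perm_edge.
Qed.

Lemma cycle_nontrivial_orbit k E : is_cycle_of_length A k E ->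
  exists2 o, o \in porbits succ_perm &
    [/\ (1 < #|o|)%N, #|o| = k & E = perm_edges succ_perm o].
Proof.
move=> kE; have [[|x t'] [t_uniq t_cycle tk k_gt0 Et]] := cycle_of_length_seq kE.
  by rewrite -tk in k_gt0.
set t := x :: t' in t_uniq t_cycle tk Et.
have succ_next y : y \in t -> succ_perm y = next t y.
  move=> yt; apply: succ_permE; apply/cycle_edgeP; exists k, E.
  by split; rewrite // Et mem_cycle_edges yt eqxx.
have succ_iter_in m : iter m succ_perm x \in t.
  by elim: m => [|m IHm]; rewrite ?mem_head // iterS succ_next ?mem_next.
have iter_next m : iter m (next t) x = iter m succ_perm x.
  by elim: m => //= m ->; rewrite succ_next.
have tE y : (y \in t) = (y \in porbit succ_perm x).
  apply/idP/porbitP => [yt|[m ->]]; last by rewrite permX.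
  have := fconnect_cycle (cycle_next t_uniq) (mem_head x t') y.
  rewrite yt => /iter_findex <-.
  by exists (findex (next t) x y); rewrite permX iter_next.
exists (porbit succ_perm x); first exact: imset_f.
split.
- rewrite card_porbit_gt1 succ_next ?mem_head // eq_sym cycle_edge_neq //.
  apply/cycle_edgeP; exists k, E.
  by split; rewrite // Et mem_cycle_edges mem_head eqxx.
- by rewrite -tk -(card_uniqP t_uniq); apply: eq_card => y; rewrite tE.
apply/setP => -[v w]; rewrite Et mem_cycle_edges mem_perm_edges -tE.
by case: (boolP (v \in t)) => //= vt; rewrite succ_next.
Qed.

Lemma card_cycles_orbits k eps :
  #|[set E | is_cycle_of_length A k E && (cycle_sign A E == eps)]| =
  #|[set o | [&& (o \in porbits succ_perm) && (1 < #|o|)%N,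
               #|o| == k & orbit_sign o == eps]]|.
Proof.
rewrite -(card_imset _ (@perm_edges_inj succ_perm)); apply: eq_card => E; rewrite inE.
apply/idP/imsetP => [/andP[kE /eqP sE]|[o]].
  have [o oP [o_gt1 ok E_o]] := cycle_nontrivial_orbit kE.
  exists o; rewrite // inE oP o_gt1 ok -sE E_o cycle_sign_perm_edges.
  by rewrite !eqxx.
rewrite inE => /and3P[/andP[oP o_gt1] /eqP <- /eqP <-] ->.
by rewrite nontrivial_orbit_cycle // cycle_sign_perm_edges eqxx.
Qed.

Lemma trivial_orbit o : o \in porbits succ_perm -> ~~ (1 < #|o|)%N ->
  #|o| = 1%N /\ orbit_sign o = 0.
Proof.
case/imsetP => x _ ->; rewrite card_porbit_gt1 negbK => /eqP x_fix.
rewrite porbit_fix // cards1 /orbit_sign big_set1 x_fix; split => //.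
by have := A_loopless x; rewrite /edge negbK => /eqP.
Qed.

Hypothesis A_nodual : no_dual_edges A.

Lemma nontrivial_orbit_card o : o \in porbits succ_perm -> (1 < #|o|)%N ->
  (3 <= #|o| < n.+1)%N.
Proof.
move=> oP o_gt1; rewrite ltnS (leq_trans (max_card _)) ?card_ord // andbT.
rewrite ltn_neqAle o_gt1 andbT eq_sym; apply/eqP => o_eq2.
case/imsetP: oP o_gt1 o_eq2 => x _ -> x_gt1 x_eq2.
have x_mov : succ_perm x != x by rewrite -card_porbit_gt1.
have sx_mov : succ_perm (succ_perm x) != succ_perm x.
  by rewrite (porbit_moved (perm_porbit _ _)).
have ssx : succ_perm (succ_perm x) = x.
  by have := iter_porbit succ_perm x; rewrite x_eq2.
by have := A_nodual (succ_perm_edge x_mov); rewrite -{2}ssx succ_perm_edge.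
Qed.

Hypothesis A_signed : signed_adj A.

Lemma nontrivial_orbit_sign o : o \in porbits succ_perm -> (1 < #|o|)%N ->
  orbit_sign o = 1 \/ orbit_sign o = -1.
Proof.
move=> oP o_gt1; apply: (big_ind (fun v : int => v = 1 \/ v = -1)); [by left| |].
  by move=> a b [->|->] [->|->]; rewrite ?mulr1 ?mulrN1 ?opprK; [left|right|right|left].
move=> i io; have := succ_perm_edge (nontrivial_orbit_moved oP o_gt1 io).
by rewrite /edge; case: (A_signed i (succ_perm i)) => [->|[->|->]]; auto.
Qed.

Lemma sum_nontrivial_orbits (G : nat -> int -> nat) :
  (\sum_(o in porbits succ_perm | 1 < #|o|) G #|o| (orbit_sign o) =
   \sum_(3 <= k < n.+1)
     (num_pos_cycles A k * G k 1%R + num_neg_cycles A k * G k (-1)%R))%N.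
Proof.
rewrite (@sum_by_len_sign _ _ _ _ G 3 n.+1).
- by apply: eq_bigr => k _; rewrite /num_pos_cycles /num_neg_cycles !card_cycles_orbits.
- by move=> o /andP[]; apply: nontrivial_orbit_card.
- by move=> o /andP[]; apply: nontrivial_orbit_sign.
Qed.

Lemma card_trivial_orbits :
  #|[set o in porbits succ_perm | ~~ (1 < #|o|)%N]| = (n - n_cyc A)%N.
Proof.
have n_cycE : n_cyc A = (\sum_(o in porbits succ_perm | 1 < #|o|) #|o|)%N.
  rewrite (sum_nontrivial_orbits (fun k _ => k)); apply: eq_bigr => k _.
  by rewrite mulnDr !(mulnC k).
have trivE : #|[set o in porbits succ_perm | ~~ (1 < #|o|)%N]| =
    (\sum_(o in porbits succ_perm | ~~ (1 < #|o|)%N) #|o|)%N.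
  rewrite -sum1_card; apply: eq_big => o; first by rewrite inE.
  by rewrite inE => /andP[oP /(trivial_orbit oP)[->]].
have sumE : (\sum_(o in porbits succ_perm) #|o|)%N = n.
  by rewrite -(card_partition (partition_porbits succ_perm)) cardsT card_ord.
rewrite trivE n_cycE -[X in (X - _)%N]sumE.
by rewrite [X in (X - _)%N](bigID (fun o => 1 < #|o|)%N) /= addKn.
Qed.

Lemma mup_char_poly_adj z : mup z (char_poly (adjC A)) =
  (#|[set o in porbits succ_perm | ~~ (1 < #|o|)%N]| * (z == 0%R) +
   \sum_(o in porbits succ_perm | 1 < #|o|) (z ^+ #|o| == (orbit_sign o)%:~R)%R)%N.
Proof.
rewrite char_poly_adj mup_prod; last first.
  move=> o /imsetP[x _ ->].
  by rewrite -size_poly_eq0 size_XnsubC // lt0n card_porbit_neq0.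
rewrite (bigID (fun o => 1 < #|o|)%N) /= addnC; congr (_ + _)%N.
  rewrite -sum_nat_const; apply: eq_big => [o|o]; first by rewrite inE.
  case/andP => oP /(trivial_orbit oP)[-> ->].
  by rewrite expr1 -[X in mup z X]expr1 mup_XsubCX eq_sym; case: (z == 0).
apply: eq_bigr => o /andP[oP o_gt1]; rewrite mup_XnsubC ?(ltnW o_gt1) //.
by case: (nontrivial_orbit_sign oP o_gt1) => ->; rewrite ?oppr_eq0 oner_eq0.
Qed.

End SignedDigraph.

Unset Implicit Arguments.

Theorem proposition1 (n : nat) (A : 'M[int]_n) :
  signed_adj A -> no_self_loops A -> no_dual_edges A -> cycle_disjoint A ->
  forall z : algC,
    mup z (char_poly (adjC A)) =
      ((n - n_cyc A) * (z == 0%R) +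
       \sum_(3 <= k < n.+1)
          (num_pos_cycles A k * (z ^+ k == 1%R) +
           num_neg_cycles A k * (z ^+ k == (-1)%R)))%N.
Proof.
move=> A_signed A_loopless A_nodual A_cycle_disjoint z.
rewrite mup_char_poly_adj // card_trivial_orbits //.
rewrite (sum_nontrivial_orbits A_loopless A_cycle_disjoint A_nodual A_signed
          (fun k e => z ^+ k == e%:~R)).
by rewrite mulr1z mulrN1z.
Qed.
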